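(* In the setting of the context (battery capacity $c$, nonnegative i.i.d. energy arrivals distributed as $X$, increasing concave reward $r$ with continuous derivative $r'$, and $r'(\underline{x})>r'(\overline{x})$), let $$c^*\triangleq\max\{c\ge 0:\ r'(c)\ge \mathbb{E}[r'(X)\mathbf{1}\{X<c\}]\},$$ the largest battery capacity for which the greedy policy is throughput-optimal. For $c\in(\underline{x},\overline{x})$ and $\rho\in(0,1)$ let $\overline{\xi}(\rho)\triangleq\min\{\frac{\mu-(1-\rho)c}{\rho},c\}$ and define $$\underline{\chi}(c)\triangleq\begin{cases}\inf_{\rho\in\left(0,\frac{\overline{x}-\mu}{\overline{x}-c}\right)}\rho\,\underline{r'}_{[\underline{x},c]}(\overline{\xi}(\rho)), & c\in(\underline{x},\mu],\\[2pt] \inf_{\rho\in\left(\frac{c-\mu}{c-\underline{x}},1\right)}\rho\,\underline{r'}_{[\underline{x},c]}(\overline{\xi}(\rho)), & c\in(\mu,\overline{x}).\end{cases}$$ Then $$c^*\le \overline{\overline{c}}\triangleq\sup\{c\in(\underline{x},\overline{x}):\ r'(c)\ge\underline{\chi}(c)\}.$$ In particular, for $r(x)=\frac12\log(1+x)$, $$\overline{\overline{c}}=\begin{cases}\min\{c_1,\overline{x}\}, & \mu\le\frac32\underline{x}+\frac12,\\ \min\{c_2,\overline{x}\}, & \mu>\frac32\underline{x}+\frac12,\end{cases}$$ where $c_1\triangleq\frac{\mu+\underline{x}+\sqrt{(\mu+\underline{x})^2-4(\underline{x}^2+\underline{x}-\mu)}}{2}$ and $c_2\triangleq\frac43\mu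+\frac13$.
   Context: Setting: $X_1,X_2,\dots$ are i.i.d. copies of a nonnegative random variable $X$; a policy chooses $G_t=f_t(X_1,\dots,X_t)$; battery $B_t=\min\{B_{t-1}-G_{t-1}+X_t,c\}$ with $B_0=G_0=0$; admissibility means $G_t\le B_t$; throughput is $\liminf_n\frac1n\mathbb{E}[\sum_{t\le n}r(G_t)]$; the greedy policy is $G_t=B_t$. The reward $r:[0,\infty)\to[0,\infty)$ is monotonically increasing and concave with continuous derivative $r'$. Notation: $\rho(x)\triangleq\mathbb{P}(X<x)$, $\underline{x}\triangleq\max\{x\ge0:\rho(x)=0\}$, $\overline{x}\triangleq\inf\{x\ge0:\rho(x)=1\}$ (possibly $+\infty$, in which case expressions involving $\overline{x}$ are understood as their limits as $\overline{x}\to\infty$), $r'(\infty)\triangleq\lim_{x\to\infty}r'(x)$, $\mu\triangleq\mathbb{E}[X]$. For $c>\underline{x}$, $\underline{r'}_{[\underline{x},c]}$ denotes the lower convex envelope (largest convex minorant) of $r'$ restricted to $[\underline{x},c]$. Logarithms are natural. *)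

From HB Require Import structures.
From mathcomp Require Import all_boot all_order all_algebra.
From mathcomp Require Import all_classical all_reals all_analysis.
Set Implicit Arguments. Unset Strict Implicit. Unset Printing Implicit Defensive.
Import Order.TTheory GRing.Theory Num.Theory.
Import numFieldNormedType.Exports.
Local Open Scope classical_set_scope.
Local Open Scope ring_scope.

Definition rhoX (d : measure_display) (T : measurableType d) (R : realType)
  (P : probability T R) (X : T -> R) (x : R) : \bar R :=
  P [set t | X t < x].

(* underline x = max {x >= 0 : rho(x) = 0}  (the max is attained) *)
Definition xlow (d : measure_display) (T : measurableType d) (R : realType)
  (P : probability T R) (X : T -> R) : R :=
  sup [set x : R | 0 <= x /\ rhoX P X x = 0%E].

Definition xup (d : measure_display) (T : measurableType d) (R : realType)
  (P : probability T R) (X : T -> R) : \bar R :=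
  ereal_inf [set x%:E | x in [set x : R | 0 <= x /\ rhoX P X x = 1%E]].

Definition meanX (d : measure_display) (T : measurableType d) (R : realType)
  (P : probability T R) (X : T -> R) : R :=
  fine (\int[P]_t (X t)%:E)%E.

Definition rp_ext (R : realType) (rp : R -> R) (y : \bar R) : R :=
  match y with
  | EFin a => rp a
  | +oo%E => lim (rp x @[x --> +oo])
  | -oo%E => rp 0
  end.

Definition convex_on (R : realType) (g : R -> R) (a b : R) : Prop :=
  forall x y t, a <= x <= b -> a <= y <= b -> 0 <= t <= 1 ->
    g (t * x + (1 - t) * y) <= t * g x + (1 - t) * g y.

Definition lconv_env (R : realType) (f : R -> R) (a b : R) (y : R) : R :=
  sup [set g y | g in [set g : R -> R |
         convex_on g a b /\ forall z, a <= z <= b -> g z <= f z]].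

Definition xi_bar (R : realType) (mu c rho : R) : R :=
  Num.min ((mu - (1 - rho) * c) / rho) c.

(* (overline x - mu)/(overline x - c), understood as its limit 1 when overline x = +oo *)
Definition rho_upper (R : realType) (xu : \bar R) (mu c : R) : R :=
  match xu with
  | EFin b => (b - mu) / (b - c)
  | _ => 1
  end.

Definition chi_lower (d : measure_display) (T : measurableType d) (R : realType)
  (P : probability T R) (X : T -> R) (rp : R -> R) (c : R) : R :=
  let mu := meanX P X in
  let a := xlow P X in
  if c <= mu then
    inf [set rho * lconv_env rp a c (xi_bar mu c rho) |
           rho in [set rho : R | 0 < rho < rho_upper (xup P X) mu c]]
  else
    inf [set rho * lconv_env rp a c (xi_bar mu c rho) |
           rho in [set rho : R | (c - mu) / (c - a) < rho < 1]].

Definition cbarbar (d : measure_display) (T : measurableType d) (R : realType)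
  (P : probability T R) (X : T -> R) (rp : R -> R) : \bar R :=
  ereal_sup [set c%:E | c in [set c : R |
     xlow P X < c /\ (c%:E < xup P X)%E /\ chi_lower P X rp c <= rp c]].

From HB Require Import structures.
From mathcomp Require Import all_boot all_order all_algebra.
From mathcomp Require Import all_classical all_reals all_analysis.
From mathcomp Require Import ring lra.
Set Implicit Arguments. Unset Strict Implicit. Unset Printing Implicit Defensive.
Import Order.TTheory GRing.Theory Num.Theory.
Import numFieldNormedType.Exports.
Local Open Scope classical_set_scope.
Local Open Scope ring_scope.

(* Part 1.  Let [c > mu] satisfy the greedy optimality condition
   [E[r'(X); X < c] <= r'(c)] and put [rho = P(X < c)].  Since
   [E[X; X >= c] > c (1 - rho)] when [c] is below [x_up], [rho] is admissible in
   the infimum defining [chi(c)] and [E[X; X < c] <= rho xi(rho)].  Any convex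
   minorant [g] of [r'] on [[x_low, c]] has a nonincreasing supporting line at
   [xi(rho)], and integrating it gives Jensen's bound
   [rho g(xi(rho)) <= E[r'(X); X < c] <= r'(c)], so [chi(c) <= r'(c)].  The mean
   [mu] itself satisfies [chi(mu) <= r'(mu)], and no [c > x_up] satisfies the
   greedy condition: by continuity of [r'] at [x_low] and [r'(x_up) < r'(x_low)],
   the mass of [X] near [x_low] makes [E[r'(X); X < c] > r'(c)].

   Part 2.  For [r = log(1 + x)/2] the derivative [r' = 1/(2(1 + x))] is convex,
   so it is its own envelope and [rho r'(xi(rho)) = rho^2/(2(rho(1 + c) - (c - mu)))].
   This is minimal at [rho = 2(c - mu)/(1 + c)] when that point is admissible,
   i.e. when [c > 2 x_low + 1], and at the lower end [(c - mu)/(c - x_low)]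
   otherwise; [r'(c) >= chi(c)] becomes [3c <= 4 mu + 1], respectively a
   quadratic inequality with largest root [c1]. *)

Section ConvexOn.
Variable R : realType.
Implicit Types (f g : R -> R) (a c : R).

Lemma convex_on_slope_le g a c u x v :
  convex_on g a c -> a <= u -> u < x -> x < v -> v <= c ->
  (g x - g u) / (x - u) <= (g v - g x) / (v - x).
Proof.
move=> gconv au ux xv vc.
have vu : 0 < v - u by rewrite subr_gt0 (lt_trans ux).
have xu : 0 < x - u by rewrite subr_gt0.
have vx : 0 < v - x by rewrite subr_gt0.
set p := (v - x) / (v - u); set q := (x - u) / (v - u).
have p01 : 0 <= p <= 1.
  apply/andP; split; first by rewrite divr_ge0 // ltW.
  by rewrite ler_pdivrMr // mul1r lerD2l lerN2 ltW.
have uac : a <= u <= c by rewrite au /= (le_trans (ltW ux)) // (le_trans (ltW xv)).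
have vac : a <= v <= c by rewrite vc andbT (le_trans au) // ltW // (lt_trans ux).
have := gconv u v p uac vac p01.
have -> : p * u + (1 - p) * v = x by rewrite /p; field; rewrite gt_eqF.
have -> : 1 - p = q by rewrite /p /q; field; rewrite gt_eqF.
move=> gx.
have hp : v - x = p * (v - u) by rewrite /p; field; rewrite gt_eqF.
have hq : x - u = q * (v - u) by rewrite /q; field; rewrite gt_eqF.
have pq : p + q = 1 by rewrite /p /q; field; rewrite gt_eqF.
rewrite ler_pdivrMr // mulrAC ler_pdivlMr // hp hq.
have : (g x - g u) * p <= (g v - g x) * q by nra.
nra.
Qed.

Lemma convex_on_subgradient g a c x : convex_on g a c -> a < x -> x < c ->
  exists s, forall y, a <= y <= c -> g x + s * (y - x) <= g y.
Proof.
move=> gconv ax xc.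
set S := [set (g x - g y) / (x - y) | y in [set y | a <= y < x]].
have S0 : S !=set0 by exists ((g x - g a) / (x - a)), a; rewrite //= lexx ax.
have Sub : ubound S ((g c - g x) / (c - x)).
  by move=> _ [y /andP[ay yx] <-]; exact: convex_on_slope_le gconv ay yx xc (lexx c).
exists (sup S) => y /andP[ay yc].
have [yx|xy|->] := ltgtP y x; last by rewrite subrr mulr0 addr0.
- have : sup S >= (g x - g y) / (x - y).
    by apply: ub_le_sup; [exists ((g c - g x) / (c - x))|exists y; rewrite //= ay yx].
  have d0 : 0 < x - y by rewrite subr_gt0.
  by rewrite ler_pdivrMr // => ?; nra.
- have d0 : 0 < y - x by rewrite subr_gt0.
  have : sup S <= (g y - g x) / (y - x).
    apply: ge_sup S0 _ => _ [u /andP[au ux] <-].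
    exact: convex_on_slope_le gconv au ux xy yc.
  by rewrite ler_pdivlMr // => ?; nra.
Qed.

(* A supporting line of positive slope may be flattened, [f] being nonincreasing. *)
Lemma convex_minorant_nonincreasing_support f g a c x :
  convex_on g a c -> (forall z, a <= z <= c -> g z <= f z) ->
  (forall y z, a <= y -> y <= z -> z <= c -> f z <= f y) -> a < x -> x < c ->
  exists2 s, s <= 0 & forall y, a <= y <= c -> g x + s * (y - x) <= f y.
Proof.
move=> gconv gf fnoninc ax xc.
have [s gs] := convex_on_subgradient gconv ax xc.
have [s0|s0] := leP s 0.
  by exists s => // y yac; exact: le_trans (gs y yac) (gf y yac).
exists 0 => // y /andP[ay yc]; rewrite mul0r addr0.
have cac : a <= c <= c by rewrite lexx (le_trans ay yc).
have := gs c cac; have := gf c cac; have := fnoninc y c ay yc (lexx c).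
have : 0 <= s * (c - x) by rewrite mulr_ge0 // ?subr_ge0 ltW.
lra.
Qed.

Lemma inv_convex_comb (u v t : R) : 0 < u -> 0 < v -> 0 <= t <= 1 ->
  (t * u + (1 - t) * v)^-1 <= t * u^-1 + (1 - t) * v^-1.
Proof.
move=> u0 v0 /andP[t0 t1].
have w0 : 0 < t * u + (1 - t) * v.
  have [->|tn0] := eqVneq t 0; first by rewrite mul0r add0r subr0 mul1r.
  have tp : 0 < t by rewrite lt_neqAle eq_sym tn0 t0.
  by apply: ltr_pwDl; [exact: mulr_gt0|apply: mulr_ge0; lra].
have -> : t * u^-1 + (1 - t) * v^-1 = (t * v + (1 - t) * u) / (u * v).
  by field; rewrite ?gt_eqF.
rewrite ler_pdivlMr ?mulr_gt0 // ler_pdivrMl //.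
have : 0 <= t * (1 - t) * (u - v) ^+ 2 by rewrite mulr_ge0 ?sqr_ge0 // mulr_ge0; lra.
nra.
Qed.

End ConvexOn.

Section LowerConvexEnvelope.
Variables (R : realType) (f : R -> R) (a c : R).
Hypothesis f_ge0 : forall z, a <= z <= c -> 0 <= f z.

Let minorants := [set g : R -> R | convex_on g a c /\ forall z, a <= z <= c -> g z <= f z].

Let minorants_at_ub y : a <= y <= c -> ubound [set g y | g in minorants] (f y).
Proof. by move=> yac _ [g [_ gf] <-]; exact: gf. Qed.

Let cst0_minorant : minorants (cst 0).
Proof. by split=> [x y t _ _ _|z /f_ge0]; rewrite /= ?mulr0 ?addr0. Qed.

Lemma lconv_env_le_of y v :
  (forall g, convex_on g a c -> (forall z, a <= z <= c -> g z <= f z) -> g y <= v) ->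
  lconv_env f a c y <= v.
Proof.
move=> gv; apply: ge_sup => [|_ [g [gconv gf] <-]]; last exact: gv.
by exists 0, (cst 0).
Qed.

Lemma lconv_env_le y : a <= y <= c -> lconv_env f a c y <= f y.
Proof. by move=> yac; apply: lconv_env_le_of => g _ gf; exact: gf. Qed.

Lemma lconv_env_ge0 y : a <= y <= c -> 0 <= lconv_env f a c y.
Proof.
move=> yac; apply: ub_le_sup; first by exists (f y); exact: minorants_at_ub.
by exists (cst 0).
Qed.

Lemma lconv_env_id y : convex_on f a c -> a <= y <= c -> lconv_env f a c y = f y.
Proof.
move=> fconv yac; apply/eqP; rewrite eq_le lconv_env_le //=.
apply: ub_le_sup; first by exists (f y); exact: minorants_at_ub.
by exists f.
Qed.

End LowerConvexEnvelope.

Section XiBar.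
Variable R : realType.
Implicit Types a mu c rho : R.

Lemma xi_bar_lt mu c rho : 0 < rho -> mu < c -> xi_bar mu c rho = (mu - (1 - rho) * c) / rho.
Proof. by move=> rho0 muc; apply/min_idPl; rewrite ler_pdivrMr //; lra. Qed.

Lemma xi_bar_ge mu c rho : 0 < rho -> c <= mu -> xi_bar mu c rho = c.
Proof. by move=> rho0 cmu; apply/min_idPr; rewrite ler_pdivlMr //; lra. Qed.

Lemma xi_bar_in_range a mu c rho : a < c -> mu < c ->
  (c - mu) / (c - a) < rho -> rho < 1 -> 0 < rho /\ a < xi_bar mu c rho < c.
Proof.
move=> ac muc + rho1; have ca : 0 < c - a by rewrite subr_gt0.
rewrite ltr_pdivrMr // => rho_lo.
have rho0 : 0 < rho by rewrite -(pmulr_lgt0 _ ca) (lt_trans _ rho_lo) // subr_gt0.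
split => //; rewrite xi_bar_lt //.
by rewrite ltr_pdivlMr // ltr_pdivrMr //; apply/andP; split; lra.
Qed.

End XiBar.

Section ExtendedRealSup.
Variable R : realType.

Lemma ereal_between (x : R) (e : \bar R) : (x%:E < e)%E -> exists y, x < y /\ (y%:E < e)%E.
Proof.
case: e => [z| |] //= xe.
  by exists ((x + z) / 2); rewrite lte_fin in xe; rewrite lte_fin; split; lra.
by exists (x + 1); rewrite ltry ltrDl.
Qed.

Lemma le_ereal_sup_of_itv (S : set R) (m : R) (e : \bar R) : (m%:E < e)%E ->
  (forall x, m < x -> (x%:E < e)%E -> S x) -> (e <= ereal_sup [set x%:E | x in S])%E.
Proof.
move=> me inS; rewrite leNgt; apply/negP => supe.
have ub x : m < x -> (x%:E < e)%E -> (x%:E <= ereal_sup [set x%:E | x in S])%E.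
  by move=> mx xe; apply: ereal_sup_ubound; exists x => //; exact: inS.
move: supe ub; case: (ereal_sup _) => [z| |] supe ub.
- have : ((Num.max z m)%:E < e)%E by rewrite EFin_max gt_max supe me.
  move=> /ereal_between[x [+ xe]]; rewrite gt_max => /andP[zx mx].
  by have := ub x mx xe; rewrite lee_fin leNgt zx.
- by move: supe; rewrite ltNge leey.
- have [x [mx xe]] := ereal_between me.
  by have := ub x mx xe; rewrite leeNy_eq.
Qed.

End ExtendedRealSup.

Section ConcaveDerivative.
Variables (R : realType) (r rp : R -> R).
Hypothesis r_concave : forall x y t : R, 0 <= x -> 0 <= y -> 0 <= t <= 1 ->
  t * r x + (1 - t) * r y <= r (t * x + (1 - t) * y).
Hypothesis r_derive : forall x : R, 0 < x -> is_derive x 1 r (rp x).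
Hypothesis r_rderive0 : ((h : R)^-1 * (r h - r 0)) @[h --> (0:R)^'+] --> rp 0.

Lemma difference_quotient_cvg x : 0 < x ->
  (fun h => h^-1 * (r (h + x) - r x)) @ (0:R)^' --> rp x.
Proof.
move=> x0; have [rdiff <-] := r_derive x0.
have -> : (fun h => h^-1 * (r (h + x) - r x)) =
    (fun h => h^-1 *: ((r \o shift x) (h *: 1) - r x)).
  by apply/funext => h /=; rewrite scaler1.
exact: rdiff.
Qed.

Lemma right_difference_quotient_cvg x : 0 <= x ->
  (fun h => h^-1 * (r (h + x) - r x)) @ (0:R)^'+ --> rp x.
Proof.
rewrite le_eqVlt => /predU1P[<-|x0]; last exact/cvg_dnbhs_at_right/difference_quotient_cvg.
by under eq_fun do rewrite addr0.
Qed.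

Lemma chord_slope_le_rp x y : 0 <= x -> x < y -> (r y - r x) / (y - x) <= rp x.
Proof.
move=> x0 xy; have yx0 : 0 < y - x by rewrite subr_gt0.
apply: (cvgr_to_ge (right_difference_quotient_cvg x0)); near=> h.
have h0 : 0 < h by near: h; exact: nbhs_right_gt.
have hyx : h < y - x by near: h; exact: nbhs_right_lt.
set t := 1 - h / (y - x).
have t01 : 0 <= t <= 1.
  apply/andP; split; rewrite /t; first by rewrite subr_ge0 ler_pdivrMr // mul1r ltW.
  by rewrite lerBlDr lerDl divr_ge0 // ltW.
have := r_concave x0 (le_trans x0 (ltW xy)) t01.
have -> : t * x + (1 - t) * y = h + x by rewrite /t; field; rewrite gt_eqF.
rewrite ler_pdivlMl //.
have -> : h * ((r y - r x) / (y - x)) = (1 - t) * (r y - r x).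
  by rewrite /t; field; rewrite gt_eqF.
lra.
Unshelve. all: by end_near.
Qed.

Lemma rp_le_chord_slope x y : 0 <= x -> x < y -> rp y <= (r y - r x) / (y - x).
Proof.
move=> x0 xy; have yx0 : 0 < y - x by rewrite subr_gt0.
have y0 : 0 < y by apply: le_lt_trans xy.
apply: (cvgr_to_le (cvg_dnbhs_at_left (difference_quotient_cvg y0))); near=> h.
have h0 : h < 0 by near: h; exact: nbhs_left_lt.
have hyx : - (y - x) < h by near: h; apply: nbhs_left_gt; rewrite oppr_lt0.
set t := - h / (y - x).
have t01 : 0 <= t <= 1.
  apply/andP; split; rewrite /t; first by rewrite divr_ge0 // ?oppr_ge0 ltW.
  by rewrite ler_pdivrMr // mul1r lerNl ltW.
have := r_concave x0 (le_trans x0 (ltW xy)) t01.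
have -> : t * x + (1 - t) * y = h + y by rewrite /t; field; rewrite gt_eqF.
rewrite ler_ndivrMl //.
have -> : h * ((r y - r x) / (y - x)) = - t * (r y - r x).
  by rewrite /t; field; rewrite gt_eqF.
lra.
Unshelve. all: by end_near.
Qed.

Lemma rp_nonincreasing x y : 0 <= x -> x <= y -> rp y <= rp x.
Proof.
move=> x0; rewrite le_eqVlt => /predU1P[<-//|xy].
exact: le_trans (rp_le_chord_slope x0 xy) (chord_slope_le_rp x0 xy).
Qed.

Lemma rp_ge0 : (forall x y : R, 0 <= x -> x <= y -> r x <= r y) ->
  forall x, 0 <= x -> 0 <= rp x.
Proof.
move=> r_nondecr x x0; have xx1 : x < x + 1 by rewrite ltrDl.
apply: le_trans (chord_slope_le_rp x0 xx1).
by rewrite divr_ge0 // subr_ge0 ?r_nondecr // ltW.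
Qed.

Lemma rp_of_log : (forall x, 0 <= x -> r x = ln (1 + x) / 2) ->
  forall x, 0 <= x -> rp x = (1 + x)^-1 / 2.
Proof.
move=> r_log x x0; have x1 : 0 < 1 + x by rewrite ltr_pwDl.
have [ln_diff ln_deriv] := is_derive1_ln x1.
have ln_quotient : (fun h => h^-1 *: ((@ln R \o shift (1 + x)) (h *: 1) - ln (1 + x)))
    @ (0:R)^' --> (1 + x)^-1 by rewrite -ln_deriv; exact: ln_diff.
have quotient_cvg : (fun h => h^-1 * (r (h + x) - r x)) @ (0:R)^'+ --> (1 + x)^-1 / 2.
  apply: cvg_trans (cvg_dnbhs_at_right (cvgM ln_quotient (cvg_cst (2^-1 : R)))).
  apply: near_eq_cvg; near=> h.
  have h0 : 0 < h by near: h; exact: nbhs_right_gt.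
  rewrite /= !r_log ?addr_ge0 ?(ltW h0) // scaler1 /GRing.scale /=.
  by rewrite (addrCA 1 h x); ring.
exact: cvg_unique (right_difference_quotient_cvg x0) quotient_cvg.
Unshelve. all: by end_near.
Qed.

End ConcaveDerivative.

Section ProbabilityRintegral.
Variables (R : realType) (d : measure_display) (T : measurableType d) (P : probability T R).

Lemma prob_fineK A : measurable A -> P A = (fine (P A))%:E.
Proof. by move=> mA; rewrite fineK // fin_num_measure. Qed.

Lemma prob_fine_le1 A : measurable A -> fine (P A) <= 1.
Proof. by move=> mA; rewrite -lee_fin -prob_fineK //; exact: probability_le1. Qed.

Lemma indic_cases (A : set T) t :
  (A t /\ \1_A t = 1 :> R) \/ (~ A t /\ \1_A t = 0 :> R).
Proof.
case: (pselect (A t)) => At; [left|right]; split; rewrite // indicE.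
  by rewrite mem_set.
by rewrite memNset.
Qed.

Lemma integrable_bounded D (h : T -> R) M : measurable D -> measurable_fun setT h ->
  (forall t, `|h t| <= M) -> P.-integrable D (EFin \o h).
Proof.
move=> mD mh hM; apply: measurable_bounded_integrable => //.
- by rewrite (le_lt_trans (probability_le1 P mD)) // ltry.
- exact: measurable_funS mh.
- exists M; split; first exact: num_real.
  by move=> x Mx t _; exact: le_trans (hM t) (ltW Mx).
Qed.

Lemma integrable_affine D f k m : measurable D -> P.-integrable D (EFin \o f) ->
  P.-integrable D (EFin \o (fun t => k + m * f t)).
Proof.
move=> mD fint.
have : P.-integrable D (EFin \o (fun t => m * f t)).
  by apply: eq_integrable mD _ _ _ (integrableZl mD m fint) => t _ /=; rewrite EFinM.
move=> /(integrableD mD (finite_measure_integrable_cst P k mD)).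
by apply: eq_integrable mD _ _ _ => t _ /=; rewrite EFinD.
Qed.

Lemma integrable_indicR D A : measurable D -> measurable A ->
  P.-integrable D (EFin \o \1_A).
Proof.
move=> mD mA; apply: (@integrable_bounded _ _ 1) => // t.
by rewrite /indic; case: (_ \in _); rewrite ?normr1 ?normr0.
Qed.

Lemma integrable_indic_affine D A k m : measurable D -> measurable A ->
  P.-integrable D (EFin \o (fun t => k + m * \1_A t)).
Proof. by move=> mD mA; apply: integrable_affine => //; exact: integrable_indicR. Qed.

Lemma Rintegral_affine D f k m : measurable D -> P.-integrable D (EFin \o f) ->
  \int[P]_(t in D) (k + m * f t) = k * fine (P D) + m * \int[P]_(t in D) f t.
Proof.
move=> mD fint; rewrite RintegralD ?Rintegral_cst ?RintegralZl //.
  exact: finite_measure_integrable_cst.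
by apply: eq_integrable mD _ _ _ (integrableZl mD m fint) => t _ /=; rewrite EFinM.
Qed.

Lemma Rintegral_indic_affine D A k m : measurable D -> measurable A ->
  \int[P]_(t in D) (k + m * \1_A t) = k * fine (P D) + m * fine (P (A `&` D)).
Proof.
move=> mD mA; rewrite Rintegral_affine //; last exact: integrable_indicR.
by rewrite /Rintegral integral_indic.
Qed.

Lemma le_Rintegral_off_null N D f g : measurable N -> P N = 0%E -> measurable D ->
  P.-integrable D (EFin \o f) -> P.-integrable D (EFin \o g) ->
  (forall t, D t -> ~ N t -> f t <= g t) ->
  \int[P]_(t in D) f t <= \int[P]_(t in D) g t.
Proof.
move=> mN N0 mD fint gint fg.
rewrite /Rintegral (negligible_integral mN mD fint N0) (negligible_integral mN mD gint N0).
have mDN : measurable (D `\` N) by exact: measurableD.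
apply: le_Rintegral (integrableS mD mDN (@subDsetl _ D N) fint)
  (integrableS mD mDN (@subDsetl _ D N) gint) _ => // t [].
exact: fg.
Qed.

End ProbabilityRintegral.

Section NonnegativeRandomVariable.
Variables (R : realType) (d : measure_display) (T : measurableType d)
  (P : probability T R) (X : T -> R).
Hypothesis X_measurable : measurable_fun setT X.
Hypothesis X_ge0 : forall t, 0 <= X t.
Hypothesis X_integrable : P.-integrable setT (EFin \o X).

Local Notation a := (xlow P X).
Local Notation b := (xup P X).
Local Notation mu := (meanX P X).

Lemma measurable_Xlt c : measurable [set t | X t < c].
Proof.
have := X_measurable measurableT (measurable_itv `]-oo, c[).
by rewrite setTI; congr measurable; apply/seteqP; split => t /=; rewrite in_itv.
Qed.

Lemma Xge_setC c : [set t | c <= X t] = ~` [set t | X t < c].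
Proof. by apply/seteqP; split => t /=; rewrite leNgt => /negP. Qed.

Lemma measurable_Xge c : measurable [set t | c <= X t].
Proof. by rewrite Xge_setC; exact/measurableC/measurable_Xlt. Qed.

Lemma prob_Xge c : fine (P [set t | c <= X t]) = 1 - fine (P [set t | X t < c]).
Proof.
rewrite Xge_setC probability_setC; last exact: measurable_Xlt.
by rewrite (prob_fineK P (measurable_Xlt c)).
Qed.

Lemma prob_Xlt_le x y : x <= y ->
  fine (P [set t | X t < x]) <= fine (P [set t | X t < y]).
Proof.
move=> xy; rewrite -lee_fin -(prob_fineK P (measurable_Xlt x)).
rewrite -(prob_fineK P (measurable_Xlt y)).
apply: le_measure; rewrite ?inE; try exact: measurable_Xlt.
by move=> t /= Xx; exact: lt_le_trans xy.
Qed.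

Lemma integrable_X D : measurable D -> P.-integrable D (EFin \o X).
Proof. by move=> mD; apply: integrableS X_integrable. Qed.

Lemma meanX_Rintegral : mu = \int[P]_t X t.
Proof. by []. Qed.

Lemma meanX_split c :
  mu = \int[P]_(t in [set t | X t < c]) X t + \int[P]_(t in [set t | c <= X t]) X t.
Proof.
have -> : mu = \int[P]_(t in [set t | X t < c] `|` [set t | c <= X t]) X t.
  by rewrite Xge_setC setUv.
rewrite Rintegral_setU //; first exact: measurable_Xlt.
- exact: measurable_Xge.
- by rewrite Xge_setC setUv.
- by apply/disj_setPS => t /= [Xc]; rewrite leNgt Xc.
Qed.

Lemma Rintegral_Xge_ge c c' : c <= c' ->
  c * (1 - fine (P [set t | X t < c])) + (c' - c) * fine (P [set t | c' <= X t])
  <= \int[P]_(t in [set t | c <= X t]) X t.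
Proof.
move=> cc'; have mc := measurable_Xge c; have mc' := measurable_Xge c'.
have capE : [set t | c' <= X t] `&` [set t | c <= X t] = [set t | c' <= X t].
  by apply/setIidPl => t /=; exact: le_trans.
rewrite -prob_Xge -capE -Rintegral_indic_affine //.
apply: le_Rintegral; rewrite ?integrable_indic_affine ?integrable_X // => t /= cX.
by case: (indic_cases R [set t | c' <= X t] t) => [[c'X ->]|[_ ->]];
  rewrite ?mulr1 ?mulr0 ?addr0 // addrC subrK.
Qed.

Local Notation xlow_set := [set x : R | 0 <= x /\ rhoX P X x = 0%E].

Lemma le_meanX_of_rhoX0 x : 0 <= x -> rhoX P X x = 0%E -> x <= mu.
Proof.
move=> x0 rhox; have rhox' : fine (P [set t | X t < x]) = 0 by rewrite /rhoX in rhox; rewrite rhox.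
have := Rintegral_Xge_ge x0; rewrite prob_Xge rhox' !subr0 mulr1 mul0r add0r.
move=> /le_trans; apply; rewrite (meanX_split 0) lerDr.
by apply: Rintegral_ge0 => t _; exact: X_ge0.
Qed.

Lemma xlow_set0 : xlow_set 0.
Proof.
split => //; rewrite /rhoX.
have -> : [set t | X t < 0] = set0 by apply/seteqP; split => t //=; rewrite ltNge X_ge0.
exact: measure0.
Qed.

Lemma has_sup_xlow_set : has_sup xlow_set.
Proof.
split; first by exists 0; exact: xlow_set0.
by exists mu => x [x0 rhox]; exact: le_meanX_of_rhoX0.
Qed.

Lemma xlow_ge0 : 0 <= a.
Proof. by apply: (ub_le_sup (proj2 has_sup_xlow_set)); exact: xlow_set0. Qed.

Lemma xlow_le_meanX : a <= mu.
Proof.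
apply: ge_sup; first by exists 0; exact: xlow_set0.
by move=> x [x0 rhox]; exact: le_meanX_of_rhoX0.
Qed.

Lemma prob_Xlt_gt0 x : a < x -> 0 < fine (P [set t | X t < x]).
Proof.
move=> ax; rewrite lt0r fine_ge0 ?measure_ge0 // andbT; apply/negP => /eqP rhox.
have : xlow_set x.
  by split; [exact: le_trans xlow_ge0 (ltW ax)|rewrite /rhoX prob_fineK ?rhox //; exact: measurable_Xlt].
by move/(ub_le_sup (proj2 has_sup_xlow_set)); rewrite leNgt ax.
Qed.

(* The event [X < x_low] is the countable union of the null events [X < x_low - 1/(n+1)]. *)
Lemma prob_Xlt_xlow : P [set t | X t < a] = 0%E.
Proof.
apply/(negligibleP _ (measurable_Xlt a)).
have -> : [set t | X t < a] = \bigcup_n [set t | X t < a - n.+1%:R^-1].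
  apply/seteqP; split => t /=.
    by move=> /ltr_add_invr[k Xk]; exists k => //=; rewrite ltrBrDr.
  by move=> [n _ /= Xn]; apply: lt_le_trans Xn _; rewrite lerBlDr lerDl.
apply: negligible_bigcup => n; apply/negligibleP; first exact: measurable_Xlt.
have en : 0 < n.+1%:R^-1 :> R by rewrite invr_gt0 ltr0Sn.
have [e [e0 rhoe] ae] := sup_adherent en has_sup_xlow_set.
apply/eqP; rewrite -measure_le0 -rhoe.
apply: le_measure; rewrite ?inE; try exact: measurable_Xlt.
by move=> t /= Xt; exact: lt_trans Xt ae.
Qed.

Lemma Rintegral_Xlt_ge c : a * fine (P [set t | X t < c]) <= \int[P]_(t in [set t | X t < c]) X t.
Proof.
rewrite -Rintegral_cst; last exact: measurable_Xlt.
apply: (le_Rintegral_off_null (measurable_Xlt a) prob_Xlt_xlow); first exact: measurable_Xlt.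
- exact/finite_measure_integrable_cst/measurable_Xlt.
- exact/integrable_X/measurable_Xlt.
by move=> t _ /negP; rewrite -leNgt.
Qed.

Lemma Rintegral_Xlt_le c :
  \int[P]_(t in [set t | X t < c]) X t <= mu - (1 - fine (P [set t | X t < c])) * c.
Proof.
have := Rintegral_Xge_ge (lexx c); rewrite subrr mul0r addr0 (meanX_split c) mulrC.
lra.
Qed.

Lemma xup_le x : 0 <= x -> fine (P [set t | X t < x]) = 1 -> (b <= x%:E)%E.
Proof.
move=> x0 rhox; apply: ereal_inf_lbound; exists x => //; split => //.
by rewrite /rhoX (prob_fineK P (measurable_Xlt x)) rhox.
Qed.

Lemma xup_ge0 : (0 <= b)%E.
Proof. by apply: le_ereal_inf_tmp => _ [x [x0 _] <-]; rewrite lee_fin. Qed.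

Lemma xup_cases : b = +oo%E \/ exists2 y, b = y%:E & 0 <= y.
Proof.
move: xup_ge0; case: (xup P X) => [y| |] b0; [right|left|] => //.
by exists y; rewrite // -lee_fin.
Qed.

Lemma prob_Xlt_lt1 x : 0 <= x -> (x%:E < b)%E -> fine (P [set t | X t < x]) < 1.
Proof.
move=> x0 xb; rewrite lt_neqAle prob_fine_le1 ?andbT; last exact: measurable_Xlt.
by apply/negP => /eqP /(xup_le x0); rewrite leNgt xb.
Qed.

Lemma prob_Xlt_eq1 y c : b = y%:E -> y < c -> fine (P [set t | X t < c]) = 1.
Proof.
move=> bE yc; have : (b < c%:E)%E by rewrite bE lte_fin.
move/ereal_inf_lt => [_ [z [z0 rhoz] <-]]; rewrite lte_fin => zc.
apply/eqP; rewrite eq_le prob_fine_le1 /=; last exact: measurable_Xlt.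
have rhoz1 : fine (P [set t | X t < z]) = 1 by rewrite /rhoX in rhoz; rewrite rhoz.
by rewrite -[X in X <= _]rhoz1 prob_Xlt_le // ltW.
Qed.

Lemma meanX_le_xup y z : b = y%:E ->
  mu <= y - (y - z) * fine (P [set t | X t < z]).
Proof.
move=> bE; set p := fine (P [set t | X t < z]).
have p0 : 0 <= p by rewrite fine_ge0 ?measure_ge0.
have p1 : p <= 1 by apply: prob_fine_le1; exact: measurable_Xlt.
apply/ler_addgt0Pr => e e0.
have null_above : P [set t | y + e <= X t] = 0%E.
  rewrite (prob_fineK P (measurable_Xge _)) prob_Xge (prob_Xlt_eq1 bE) ?subrr //.
  by rewrite ltrDl.
apply: (@le_trans _ _ ((y + e) + - (y + e - z) * p)); last by nra.
rewrite meanX_Rintegral.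
have -> : (y + e) + - (y + e - z) * p =
    \int[P]_t ((y + e) + - (y + e - z) * \1_[set t | X t < z] t).
  have mz := measurable_Xlt z.
  by rewrite Rintegral_indic_affine // probability_setT mulr1 setIT.
apply: (le_Rintegral_off_null (measurable_Xge _) null_above) => //.
  exact/integrable_indic_affine/measurable_Xlt.
move=> t _ /negP; rewrite -ltNge => Xye.
case: (indic_cases R [set t | X t < z] t) => [[/= Xz ->]|[_ ->]]; last first.
  by rewrite mulr0 addr0 ltW.
by rewrite mulr1 opprB addrC subrK ltW.
Qed.

Section Nondegenerate.
Hypothesis xlow_lt_xup : (a%:E < b)%E.

Lemma xlow_lt_meanX : a < mu.
Proof.
have [c [ac cb]] := ereal_between xlow_lt_xup.
have c0 : 0 <= c := le_trans xlow_ge0 (ltW ac).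
have q0 : 0 < fine (P [set t | c <= X t]) by rewrite prob_Xge subr_gt0 prob_Xlt_lt1.
apply: lt_le_trans (_ : a + (c - a) * fine (P [set t | c <= X t]) <= mu).
  by rewrite ltrDl mulr_gt0 // subr_gt0.
have -> : a + (c - a) * fine (P [set t | c <= X t]) =
    \int[P]_t (a + (c - a) * \1_[set t | c <= X t] t).
  have mc := measurable_Xge c.
  by rewrite Rintegral_indic_affine // probability_setT mulr1 setIT.
rewrite meanX_Rintegral.
apply: (le_Rintegral_off_null (measurable_Xlt a) prob_Xlt_xlow) => //.
  exact/integrable_indic_affine/measurable_Xge.
move=> t _ /negP; rewrite -leNgt => aX.
case: (indic_cases R [set t | c <= X t] t) => [[/= cX ->]|[_ ->]].
  by rewrite mulr1 addrC subrK.
by rewrite mulr0 addr0.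
Qed.

Lemma meanX_lt_xup : (mu%:E < b)%E.
Proof.
case: xup_cases => [->|[y bE _]]; first exact: ltry.
have := xlow_lt_xup; rewrite bE !lte_fin => ay.
apply: le_lt_trans (meanX_le_xup ((a + y) / 2) bE) _.
rewrite ltrBlDr ltrDl mulr_gt0 ?prob_Xlt_gt0 //; lra.
Qed.

End Nondegenerate.

Lemma prob_Xlt_admissible c : mu < c -> (c%:E < b)%E ->
  (c - mu) / (c - a) < fine (P [set t | X t < c]).
Proof.
move=> muc cb; have ac := le_lt_trans xlow_le_meanX muc.
have c0 : 0 <= c := le_trans xlow_ge0 (ltW ac).
have [c' [cc' c'b]] := ereal_between cb.
have q0 : 0 < fine (P [set t | c' <= X t]).
  by rewrite prob_Xge subr_gt0 prob_Xlt_lt1 // (le_trans c0 (ltW cc')).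
have := Rintegral_Xge_ge (ltW cc'); have := Rintegral_Xlt_ge c.
have : 0 < (c' - c) * fine (P [set t | c' <= X t]) by rewrite mulr_gt0 // subr_gt0.
rewrite ltr_pdivrMr ?subr_gt0 // (meanX_split c); nra.
Qed.

Section GreedyCapacity.
Variable rp : R -> R.
Hypothesis rp_antitone : forall x y, 0 <= x -> x <= y -> rp y <= rp x.
Hypothesis rp_nonneg : forall x, 0 <= x -> 0 <= rp x.
Hypothesis rp_cont : {within [set x : R | 0 <= x], continuous rp}.
Hypothesis rp_xup_lt_xlow : rp_ext rp b < rp a.

Lemma xlow_lt_xup : (a%:E < b)%E.
Proof.
case: xup_cases => [->|[y bE y0]]; first exact: ltry.
rewrite bE lte_fin ltNge; apply/negP => ya.
by move: rp_xup_lt_xlow; rewrite bE /= ltNge rp_antitone.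
Qed.

Let a_lt_mu : a < mu := xlow_lt_meanX xlow_lt_xup.
Let mu_lt_b : (mu%:E < b)%E := meanX_lt_xup xlow_lt_xup.

Let rp_ge0_on c z : a <= z <= c -> 0 <= rp z.
Proof. by case/andP => az _; apply: rp_nonneg; exact: le_trans xlow_ge0 az. Qed.

Let rp_antitone_on c y z : a <= y -> y <= z -> z <= c -> rp z <= rp y.
Proof. by move=> ay yz _; apply: rp_antitone yz; exact: le_trans xlow_ge0 ay. Qed.

Lemma measurable_rpX : measurable_fun setT (fun t => rp (X t)).
Proof.
pose rp0 x := rp (Num.max 0 x).
have -> : (fun t => rp (X t)) = rp0 \o X by apply/funext => t /=; rewrite /rp0 max_r.
apply: measurableT_comp => //; apply: measurable_realfun.nonincreasing_measurable => //.
move=> x y xy; apply: rp_antitone; first by rewrite le_max lexx.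
by rewrite ge_max !le_max lexx xy /= orbT.
Qed.

Lemma integrable_rpX D : measurable D -> P.-integrable D (EFin \o (fun t => rp (X t))).
Proof.
move=> mD; apply: (@integrable_bounded _ _ _ _ _ _ (rp 0)) => //.
  exact: measurable_rpX.
by move=> t; rewrite ger0_norm ?rp_nonneg ?rp_antitone.
Qed.

Lemma integral_rpX D : measurable D ->
  (\int[P]_(t in D) (rp (X t))%:E)%E = (\int[P]_(t in D) rp (X t))%:E.
Proof.
by move=> mD; rewrite /Rintegral fineK //; apply: integrable_fin_num => //; exact: integrable_rpX.
Qed.

Lemma Rintegral_rpX_le c1 c2 : c1 <= c2 ->
  \int[P]_(t in [set t | X t < c1]) rp (X t) <= \int[P]_(t in [set t | X t < c2]) rp (X t).
Proof.
move=> c12; have m1 := measurable_Xlt c1; have m2 := measurable_Xlt c2.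
rewrite -lee_fin -!integral_rpX //; apply: ge0_subset_integral => //.
- by apply/measurable_realfun.measurable_EFinP; apply: measurable_funS measurable_rpX.
- by move=> t _; rewrite lee_fin rp_nonneg.
- by move=> t /= Xc1; exact: lt_le_trans c12.
Qed.

(* Jensen's inequality, through a nonincreasing supporting line of [g] at [x]. *)
Lemma rp_mul_minorant_le c x g : a < x -> x < c ->
  \int[P]_(t in [set t | X t < c]) X t <= fine (P [set t | X t < c]) * x ->
  convex_on g a c -> (forall z, a <= z <= c -> g z <= rp z) ->
  fine (P [set t | X t < c]) * g x <= \int[P]_(t in [set t | X t < c]) rp (X t).
Proof.
move=> ax xc meanx gconv grp; have mc := measurable_Xlt c.
have [s s0 support] :=
  convex_minorant_nonincreasing_support gconv grp (@rp_antitone_on c) ax xc.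
set rho := fine (P [set t | X t < c]) in meanx *.
apply: (@le_trans _ _ (\int[P]_(t in [set t | X t < c]) (g x - s * x + s * X t))).
  rewrite Rintegral_affine //; last exact: integrable_X.
  have := ler_wnM2l s0 meanx; rewrite -/rho; nra.
apply: (le_Rintegral_off_null (measurable_Xlt a) prob_Xlt_xlow) => //.
- exact/integrable_affine/integrable_X.
- exact: integrable_rpX.
move=> t /= Xc /negP; rewrite -leNgt => aX.
have := support (X t); rewrite aX ltW //= => /(_ isT) /(le_trans _); apply.
by rewrite mulrBr addrA addrAC.
Qed.

Lemma chi_lower_le_Rintegral_rpX c : mu < c -> (c%:E < b)%E ->
  chi_lower P X rp c <= \int[P]_(t in [set t | X t < c]) rp (X t).
Proof.
move=> muc cb; have ac := lt_trans a_lt_mu muc.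
have c0 : 0 <= c := le_trans xlow_ge0 (ltW ac).
set rho := fine (P [set t | X t < c]).
have rho1 : rho < 1 := prob_Xlt_lt1 c0 cb.
have rho_lo : (c - mu) / (c - a) < rho := prob_Xlt_admissible muc cb.
have [rho0 /andP[axi xic]] := xi_bar_in_range ac muc rho_lo rho1.
have rho_xi : rho * xi_bar mu c rho = mu - (1 - rho) * c.
  by rewrite xi_bar_lt // mulrC divfK // gt_eqF.
rewrite /chi_lower /=; case: ifP => [|_]; first by rewrite leNgt muc.
apply: (@le_trans _ _ (rho * lconv_env rp a c (xi_bar mu c rho))).
  apply: ge_inf; last by exists rho => //; apply/andP.
  exists 0 => _ [r' /andP[r'_lo r'1] <-].
  have [r'0 /andP[ax' x'c]] := xi_bar_in_range ac muc r'_lo r'1.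
  apply: mulr_ge0; first exact: ltW.
  by apply: (lconv_env_ge0 (@rp_ge0_on c)); rewrite !ltW.
rewrite -ler_pdivlMl //; apply: (lconv_env_le_of (@rp_ge0_on c)) => g gconv grp.
rewrite ler_pdivlMl //; apply: rp_mul_minorant_le => //.
by rewrite rho_xi; exact: Rintegral_Xlt_le.
Qed.

Lemma chi_lower_le_rp_le_meanX c : a < c -> c <= mu -> chi_lower P X rp c <= rp c.
Proof.
move=> ac cmu; have cac : a <= c <= c by rewrite lexx ltW.
have ru0 : 0 < rho_upper b mu c.
  case: xup_cases mu_lt_b => [->//|[y bE _]]; rewrite bE lte_fin => muy.
  by rewrite /= divr_gt0 // subr_gt0 // (le_lt_trans cmu).
set ru := rho_upper b mu c in ru0 *.
set rho := Num.min ru 1 / 2.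
have rho0 : 0 < rho by rewrite divr_gt0 // lt_min ru0 ltr01.
have : Num.min ru 1 <= ru /\ Num.min ru 1 <= 1 by split; rewrite ge_min lexx ?orbT.
move=> [m1 m2]; have rho_ru : rho < ru by rewrite /rho ltr_pdivrMr //; lra.
have rho1 : rho <= 1 by rewrite /rho ler_pdivrMr //; lra.
rewrite /chi_lower /=; case: ifP => [_|]; last by rewrite cmu.
apply: (@le_trans _ _ (rho * lconv_env rp a c (xi_bar mu c rho))).
  apply: ge_inf; last by exists rho => //; apply/andP.
  exists 0 => _ [r' /andP[r'0 _] <-].
  rewrite xi_bar_ge //; apply: mulr_ge0; first exact: ltW.
  exact: (lconv_env_ge0 (@rp_ge0_on c)).
rewrite xi_bar_ge //; apply: le_trans (lconv_env_le (@rp_ge0_on c) cac).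
by apply: ler_piMl => //; exact: (lconv_env_ge0 (@rp_ge0_on c)).
Qed.

Definition chi_feasible c := a < c /\ (c%:E < b)%E /\ chi_lower P X rp c <= rp c.

Lemma meanX_le_cbarbar : (mu%:E <= cbarbar P X rp)%E.
Proof.
apply: ereal_sup_ubound; exists mu => //.
by split; [|split] => //; exact: chi_lower_le_rp_le_meanX.
Qed.

Lemma chi_feasible_of_greedy c : mu < c -> (c%:E < b)%E ->
  \int[P]_(t in [set t | X t < c]) rp (X t) <= rp c -> chi_feasible c.
Proof.
move=> muc cb greedy; split; first exact: lt_trans a_lt_mu muc.
by split=> //; exact: le_trans (chi_lower_le_Rintegral_rpX muc cb) greedy.
Qed.

Lemma rp_gt_near_xlow v : v < rp a ->
  exists2 e, 0 < e & forall x, a <= x -> x < a + e -> v < rp x.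
Proof.
move=> v_lt.
have rp_cvg : rp x @[x --> within [set x : R | 0 <= x] (nbhs a)] --> rp a.
  have := @rp_cont a; rewrite nbhs_subspace_in //; exact: xlow_ge0.
have : \forall x \near within [set x | 0 <= x] (nbhs a), v < rp x.
  exact: cvgr_gt _ rp_cvg _ v_lt.
rewrite near_withinE => /nbhs_ballP[e /= e0 near_a].
exists e => // x ax xae; have x0 := le_trans xlow_ge0 ax.
by apply: near_a => //; rewrite /ball /= distrC ger0_norm ?subr_ge0 // ltrBlDl.
Qed.

Lemma rp_lt_Rintegral_rpX_above_xup y c : b = y%:E -> y < c ->
  rp c < \int[P]_(t in [set t | X t < c]) rp (X t).
Proof.
move=> bE yc; have mc := measurable_Xlt c.
have ay : a < y by move: xlow_lt_xup; rewrite bE lte_fin.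
have y0 : 0 <= y := le_trans xlow_ge0 (ltW ay).
have rpy : rp y < rp a by move: rp_xup_lt_xlow; rewrite bE.
set e := (rp a - rp y) / 2.
have e0 : 0 < e by rewrite divr_gt0 // subr_gt0.
have rpy_e : rp y + e < rp a by rewrite /e; lra.
have [dl dl0 near_a] := rp_gt_near_xlow rpy_e.
set z := Num.min (a + dl) c; have mz := measurable_Xlt z.
have az : a < z by rewrite lt_min ltrDl dl0 (lt_trans ay yc).
have zc : z <= c by rewrite ge_min lexx orbT.
have zad : z <= a + dl by rewrite ge_min lexx.
have capE : [set t | X t < z] `&` [set t | X t < c] = [set t | X t < z].
  by apply/setIidPl => t /= Xz; exact: lt_le_trans Xz zc.
apply: lt_le_trans (_ : rp c + e * fine (P [set t | X t < z]) <= _).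
  by rewrite ltrDl mulr_gt0 // prob_Xlt_gt0.
have -> : rp c + e * fine (P [set t | X t < z]) =
    \int[P]_(t in [set t | X t < c]) (rp c + e * \1_[set t | X t < z] t).
  by rewrite Rintegral_indic_affine // (prob_Xlt_eq1 bE yc) mulr1 capE.
apply: (le_Rintegral_off_null (measurable_Xlt a) prob_Xlt_xlow) => //.
- exact: integrable_indic_affine.
- exact: integrable_rpX.
move=> t /= Xc /negP; rewrite -leNgt => aX.
have rpc : rp c <= rp y by rewrite rp_antitone // ltW.
case: (indic_cases R [set t | X t < z] t) => [[/= Xz ->]|[_ ->]].
  have := near_a _ aX (lt_le_trans Xz zad); rewrite mulr1; lra.
by rewrite mulr0 addr0 rp_antitone ?X_ge0 // ltW.
Qed.

Lemma le_cbarbar_of_greedy c : 0 <= c ->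
  (\int[P]_(t in [set t | (X t < c)%R]) (rp (X t))%:E <= (rp c)%:E)%E ->
  (c%:E <= cbarbar P X rp)%E.
Proof.
move=> c0; rewrite (integral_rpX (measurable_Xlt c)) lee_fin => greedy.
have [cmu|muc] := leP c mu.
  by apply: le_trans meanX_le_cbarbar; rewrite lee_fin.
have [cb|] := ltP (c%:E) b.
  by apply: ereal_sup_ubound; exists c => //; exact: chi_feasible_of_greedy.
case: xup_cases => [->|[y bE _]]; first by rewrite leNgt ltry.
rewrite bE lee_fin le_eqVlt => /predU1P[yc|yc]; last first.
  by have := rp_lt_Rintegral_rpX_above_xup bE yc; rewrite ltNge greedy.
apply: (@le_ereal_sup_of_itv _ _ mu) => [|x mux]; first by rewrite lte_fin.
rewrite lte_fin => xc; apply: chi_feasible_of_greedy => //; first by rewrite bE yc lte_fin.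
apply: le_trans (Rintegral_rpX_le (ltW xc)) _; apply: le_trans greedy _.
by apply: rp_antitone (ltW xc); exact: le_trans xlow_ge0 (ltW (lt_trans a_lt_mu mux)).
Qed.

Lemma cbarbar_eq_min t : mu < t ->
  (forall c, mu < c -> c < t -> (c%:E < b)%E -> chi_feasible c) ->
  (forall c, mu < c -> chi_feasible c -> c <= t) ->
  cbarbar P X rp = Order.min t%:E b.
Proof.
move=> mut feasible bounded; apply/eqP; rewrite eq_le; apply/andP; split.
  apply: ge_ereal_sup => _ [c cfeas <-]; have [_ [cb _]] := cfeas.
  rewrite le_min (ltW cb) andbT lee_fin.
  by have [cmu|muc] := leP c mu; [exact: le_trans cmu (ltW mut)|exact: bounded].
apply: (@le_ereal_sup_of_itv _ _ mu); first by rewrite lt_min lte_fin mut mu_lt_b.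
by move=> c muc; rewrite lt_min lte_fin => /andP[ct cb]; exact: feasible.
Qed.

Section LogReward.
Hypothesis rp_log : forall x, 0 <= x -> rp x = (1 + x)^-1 / 2.

Local Notation log_term c rho := (rho ^+ 2 / (2 * (rho * (1 + c) - (c - mu)))).

Lemma convex_on_rp_log c : convex_on rp a c.
Proof.
move=> x y t /andP[ax _] /andP[ay _] t01; have /andP[t0 t1] := t01.
have x0 : 0 <= x := le_trans xlow_ge0 ax.
have y0 : 0 <= y := le_trans xlow_ge0 ay.
have z0 : 0 <= t * x + (1 - t) * y by rewrite addr_ge0 // mulr_ge0 // subr_ge0.
rewrite !rp_log //.
have -> : t * ((1 + x)^-1 / 2) + (1 - t) * ((1 + y)^-1 / 2) =
    (t * (1 + x)^-1 + (1 - t) * (1 + y)^-1) / 2 by ring.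
rewrite ler_pM2r // (_ : 1 + _ = t * (1 + x) + (1 - t) * (1 + y)); last by ring.
by apply: inv_convex_comb => //; rewrite ltr_pwDl.
Qed.

Lemma log_term_den_gt0 c rho : a < c -> mu < c -> (c - mu) / (c - a) < rho ->
  0 < rho * (1 + c) - (c - mu).
Proof.
move=> ac muc; have ca : 0 < c - a by rewrite subr_gt0.
rewrite ltr_pdivrMr // => rho_lo.
have rho0 : 0 < rho by rewrite -(pmulr_lgt0 _ ca) (lt_trans _ rho_lo) // subr_gt0.
have := xlow_ge0; nra.
Qed.

Lemma mul_lconv_env_log c rho : mu < c -> (c - mu) / (c - a) < rho -> rho < 1 ->
  rho * lconv_env rp a c (xi_bar mu c rho) = log_term c rho.
Proof.
move=> muc rho_lo rho1; have ac := lt_trans a_lt_mu muc.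
have [rho0 /andP[axi xic]] := xi_bar_in_range ac muc rho_lo rho1.
have den0 := log_term_den_gt0 ac muc rho_lo.
rewrite (lconv_env_id (@rp_ge0_on c)) ?(ltW axi) ?(ltW xic) //; last exact: convex_on_rp_log.
have xi0 : 0 <= xi_bar mu c rho := le_trans xlow_ge0 (ltW axi).
have xi1 : 0 < 1 + xi_bar mu c rho by rewrite ltr_pwDl.
rewrite rp_log //; rewrite xi_bar_lt // in xi1 *; set xi := (mu - (1 - rho) * c) / rho in xi1 *.
have -> : rho * (1 + c) - (c - mu) = rho * (1 + xi) by rewrite /xi; field; rewrite gt_eqF.
by field; rewrite !gt_eqF.
Qed.

Lemma chi_lower_log c : mu < c -> chi_lower P X rp c =
  inf [set log_term c rho | rho in [set rho | (c - mu) / (c - a) < rho < 1]].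
Proof.
move=> muc; rewrite /chi_lower /=; case: ifP => [|_]; first by rewrite leNgt muc.
by congr inf; apply: eq_imagel => rho /andP[rho_lo rho1]; exact: mul_lconv_env_log.
Qed.

Lemma chi_feasible_of_log_term c rho : mu < c -> (c%:E < b)%E ->
  (c - mu) / (c - a) < rho -> rho < 1 ->
  rho ^+ 2 * (1 + c) <= rho * (1 + c) - (c - mu) -> chi_feasible c.
Proof.
move=> muc cb rho_lo rho1 small; have ac := lt_trans a_lt_mu muc.
have c1 : 0 < 1 + c by rewrite ltr_pwDl // (le_trans xlow_ge0) // ltW.
have den0 := log_term_den_gt0 ac muc rho_lo.
split=> //; split=> //; rewrite chi_lower_log // rp_log; last by rewrite (le_trans xlow_ge0) // ltW.
apply: le_trans (_ : log_term c rho <= _).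
  apply: ge_inf; last by exists rho => //; apply/andP.
  exists 0 => _ [r' /andP[r'_lo _] <-].
  by rewrite divr_ge0 ?sqr_ge0 // mulr_ge0 // ltW // log_term_den_gt0.
rewrite ler_pdivrMr ?mulr_gt0 //.
have -> : (1 + c)^-1 / 2 * (2 * (rho * (1 + c) - (c - mu))) =
    (rho * (1 + c) - (c - mu)) / (1 + c) by field; rewrite gt_eqF.
by rewrite ler_pdivlMr.
Qed.

Lemma rp_ge_of_log_term_lb c w : mu < c -> chi_feasible c ->
  (forall rho, (c - mu) / (c - a) < rho -> rho < 1 -> w <= log_term c rho) ->
  w <= rp c.
Proof.
move=> muc [ac [_ chi_le]] w_lb; apply: le_trans chi_le; rewrite chi_lower_log //.
apply: lb_le_inf => [|_ [rho /andP[rho_lo rho1] <-]]; last exact: w_lb.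
have ca : 0 < c - a by rewrite subr_gt0.
have L1 : (c - mu) / (c - a) < 1 by rewrite ltr_pdivrMr // mul1r; have := a_lt_mu; lra.
set rho := ((c - mu) / (c - a) + 1) / 2.
by exists (log_term c rho), rho => //; rewrite /rho; apply/andP; split; lra.
Qed.

(* The unconstrained minimum of [log_term c] is attained at [rho = 2 (c - mu)/(1 + c)]. *)
Lemma chi_feasible_log_le_c2 c : mu < c -> chi_feasible c -> 3 * c <= 4 * mu + 1.
Proof.
move=> muc cfeas; have ac := lt_trans a_lt_mu muc.
have c0 : 0 <= c := le_trans xlow_ge0 (ltW ac).
have c1 : 0 < 1 + c by rewrite ltr_pwDl.
have cmu : 0 < c - mu by rewrite subr_gt0.
have lb rho : (c - mu) / (c - a) < rho -> rho < 1 ->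
    2 * (c - mu) / (1 + c) ^+ 2 <= log_term c rho.
  move=> rho_lo _; have den0 := log_term_den_gt0 ac muc rho_lo.
  have den2 : 0 < 2 * (rho * (1 + c) - (c - mu)) by rewrite mulr_gt0.
  rewrite ler_pdivrMr ?mulr_gt0 // mulrAC ler_pdivlMr ?exprn_gt0 //.
  have : 0 <= (rho * (1 + c) - 2 * (c - mu)) ^+ 2 by exact: sqr_ge0.
  nra.
have := rp_ge_of_log_term_lb muc cfeas lb.
rewrite rp_log // ler_pdivrMr ?exprn_gt0 //.
have -> : (1 + c)^-1 / 2 * (1 + c) ^+ 2 = (1 + c) / 2 by field; rewrite gt_eqF.
lra.
Qed.

(* For [c <= 2 x_low + 1] the minimum over admissible [rho] is at the lower end [(c - mu)/(c - x_low)]. *)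
Lemma chi_feasible_log_quadratic c : mu < c -> c <= 2 * a + 1 -> chi_feasible c ->
  c ^+ 2 - (a + mu) * c + (a ^+ 2 + a - mu) <= 0.
Proof.
move=> muc c2a cfeas; have ac := lt_trans a_lt_mu muc.
have a0 := xlow_ge0; have c0 : 0 <= c := le_trans a0 (ltW ac).
have c1 : 0 < 1 + c by rewrite ltr_pwDl.
have a1 : 0 < 1 + a by rewrite ltr_pwDl.
have ca : 0 < c - a by rewrite subr_gt0.
have cmu : 0 < c - mu by rewrite subr_gt0.
have lb rho : (c - mu) / (c - a) < rho -> rho < 1 ->
    (c - mu) / (2 * ((c - a) * (1 + a))) <= log_term c rho.
  move=> rho_lo _; have den0 := log_term_den_gt0 ac muc rho_lo.
  have den2 : 0 < 2 * (rho * (1 + c) - (c - mu)) by rewrite mulr_gt0.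
  move: rho_lo; rewrite ltr_pdivrMr // => rho_lo.
  have rho0 : 0 < rho by rewrite -(pmulr_lgt0 _ ca); apply: lt_trans rho_lo.
  rewrite ler_pdivrMr ?mulr_gt0 // mulrAC ler_pdivlMr ?mulr_gt0 //.
  have h1 : 0 <= rho * (c - a) - (c - mu) by lra.
  have h2 : 0 <= rho * (1 + a) - (c - mu).
    have : rho * (c - a) <= rho * (1 + a) by apply: ler_wpM2l; lra.
    lra.
  have := mulr_ge0 h1 h2; nra.
have := rp_ge_of_log_term_lb muc cfeas lb.
rewrite rp_log // ler_pdivrMr ?mulr_gt0 //.
have -> : (1 + c)^-1 / 2 * (2 * ((c - a) * (1 + a))) = (c - a) * (1 + a) / (1 + c).
  by field; rewrite gt_eqF.
rewrite ler_pdivlMr //; nra.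
Qed.

Lemma chi_feasible_of_log_quadratic c : mu < c -> (c%:E < b)%E ->
  c ^+ 2 - (a + mu) * c + (a ^+ 2 + a - mu) < 0 -> chi_feasible c.
Proof.
move=> muc cb quad; have ac := lt_trans a_lt_mu muc.
have a0 := xlow_ge0; have c0 : 0 <= c := le_trans a0 (ltW ac).
have c1 : 0 < 1 + c by rewrite ltr_pwDl.
have ca : 0 < c - a by rewrite subr_gt0.
have cmu : 0 < c - mu by rewrite subr_gt0.
set L := (c - mu) / (c - a).
have L0 : 0 < L by rewrite divr_gt0.
have L1 : L < 1 by rewrite ltr_pdivrMr // mul1r; have := a_lt_mu; lra.
set Q := L ^+ 2 * (1 + c) - L * (1 + c) + (c - mu).
have Q0 : Q < 0.
  have QE : Q * (c - a) ^+ 2 = (c - mu) * (c ^+ 2 - (a + mu) * c + (a ^+ 2 + a - mu)).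
    by rewrite /Q /L; field; rewrite gt_eqF.
  by rewrite -(pmulr_llt0 _ (exprn_gt0 2 ca)) QE pmulr_rlt0.
set e := Num.min (- Q / (2 * (1 + c))) ((1 - L) / 2).
have e1 : e <= - Q / (2 * (1 + c)) by rewrite ge_min lexx.
have e2 : e <= (1 - L) / 2 by rewrite ge_min lexx orbT.
have e0 : 0 < e by rewrite lt_min; apply/andP; split; apply: divr_gt0; lra.
have ec : e * (1 + c) <= - Q / 2.
  by move: e1; rewrite ler_pdivlMr ?mulr_gt0 // => ?; lra.
apply: (@chi_feasible_of_log_term c (L + e)) => //; [by rewrite ltrDl|lra|].
have : e * (1 + c) * (2 * L + e - 1) <= e * (1 + c).
  by rewrite -[leRHS]mulr1 ler_wpM2l ?mulr_ge0 //; lra.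
have : (L + e) ^+ 2 * (1 + c) - ((L + e) * (1 + c) - (c - mu)) =
  Q + e * (1 + c) * (2 * L + e - 1) by rewrite /Q; ring.
lra.
Qed.

Lemma chi_feasible_of_le_c2 c : mu < c -> (c%:E < b)%E ->
  2 * a + 1 < c -> 3 * c <= 4 * mu + 1 -> chi_feasible c.
Proof.
move=> muc cb c2a c3; have ac := lt_trans a_lt_mu muc.
have c1 : 0 < 1 + c by rewrite ltr_pwDl // (le_trans xlow_ge0) // ltW.
have ca : 0 < c - a by rewrite subr_gt0.
have cmu : 0 < c - mu by rewrite subr_gt0.
apply: (@chi_feasible_of_log_term c (2 * (c - mu) / (1 + c))) => //.
- by rewrite ltr_pdivrMr // mulrAC ltr_pdivlMr //; nra.
- by rewrite ltr_pdivrMr // mul1r; lra.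
have -> : (2 * (c - mu) / (1 + c)) ^+ 2 * (1 + c) = 4 * (c - mu) ^+ 2 / (1 + c).
  by field; rewrite gt_eqF.
have -> : 2 * (c - mu) / (1 + c) * (1 + c) - (c - mu) = c - mu.
  by field; rewrite gt_eqF.
by rewrite ler_pdivrMr //; nra.
Qed.

Lemma cbarbar_log_small_mean : mu <= 3 / 2 * a + 1 / 2 ->
  cbarbar P X rp =
  Order.min ((mu + a + Num.sqrt ((mu + a) ^+ 2 - 4 * (a ^+ 2 + a - mu))) / 2)%:E b.
Proof.
move=> small; have a0 := xlow_ge0; have amu := a_lt_mu.
set D := (mu + a) ^+ 2 - 4 * (a ^+ 2 + a - mu).
have D0 : 0 < D.
  have -> : D = (mu - a) * (mu + 3 * a + 4) by rewrite /D; ring.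
  by rewrite mulr_gt0 //; lra.
set s := Num.sqrt D; have s0 : 0 <= s := sqrtr_ge0 _.
have s2 : s ^+ 2 = D by rewrite sqr_sqrtr // ltW.
have quadE c : c ^+ 2 - (a + mu) * c + (a ^+ 2 + a - mu) =
    ((2 * c - (mu + a)) ^+ 2 - s ^+ 2) / 4 by rewrite s2 /D; field.
apply: cbarbar_eq_min.
- suff : mu - a < s by lra.
  rewrite -ltr_sqr ?nnegrE ?subr_ge0 ?(ltW amu) // s2 /D; nra.
- move=> c muc cc1 cb; apply: chi_feasible_of_log_quadratic => //.
  have : 2 * c - (mu + a) < s by lra.
  rewrite quadE pmulr_llt0 // subr_lt0 ltr_sqr ?nnegrE //; lra.
- move=> c muc cfeas; have [c2a|c2a] := leP c (2 * a + 1); last first.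
    by have := chi_feasible_log_le_c2 muc cfeas; lra.
  have := chi_feasible_log_quadratic muc c2a cfeas.
  rewrite quadE pmulr_lle0 // subr_le0 ler_sqr ?nnegrE //; lra.
Qed.

Lemma cbarbar_log_large_mean : 3 / 2 * a + 1 / 2 < mu ->
  cbarbar P X rp = Order.min (4 / 3 * mu + 1 / 3)%:E b.
Proof.
move=> large; have a0 := xlow_ge0.
apply: cbarbar_eq_min; first lra.
- move=> c muc cc2 cb; have [c2a|c2a] := leP c (2 * a + 1); last first.
    by apply: chi_feasible_of_le_c2 => //; lra.
  apply: chi_feasible_of_log_quadratic => //.
  have -> : c ^+ 2 - (a + mu) * c + (a ^+ 2 + a - mu) =
    (c - mu) * (c - (2 * a + 1)) + (a + 1) * (c + a - 2 * mu) by ring.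
  have : (c - mu) * (c - (2 * a + 1)) <= 0 by rewrite mulr_ge0_le0 //; lra.
  have : (a + 1) * (c + a - 2 * mu) < 0 by rewrite pmulr_rlt0; lra.
  lra.
- by move=> c muc cfeas; have := chi_feasible_log_le_c2 muc cfeas; lra.
Qed.

End LogReward.

End GreedyCapacity.
End NonnegativeRandomVariable.

Theorem proposition5 (R : realType) (d : measure_display) (T : measurableType d)
  (P : probability T R) (X : T -> R) (r rp : R -> R) :
  measurable_fun setT X ->
  (forall t, 0 <= X t) ->
  P.-integrable setT (EFin \o X) ->
  (forall x : R, 0 <= x -> 0 <= r x) ->
  (forall x y : R, 0 <= x -> x <= y -> r x <= r y) ->
  (forall x y t : R, 0 <= x -> 0 <= y -> 0 <= t <= 1 ->
     t * r x + (1 - t) * r y <= r (t * x + (1 - t) * y)) ->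
  (forall x : R, 0 < x -> is_derive x 1 r (rp x)) ->
  ((h : R)^-1 * (r h - r 0)) @[h --> (0:R)^'+] --> rp 0 ->
  {within [set x : R | 0 <= x], continuous rp} ->
  rp_ext rp (xup P X) < rp (xlow P X) ->
  (forall c : R, 0 <= c ->
     (\int[P]_(t in [set t | (X t < c)%R]) (rp (X t))%:E <= (rp c)%:E)%E ->
     (c%:E <= cbarbar P X rp)%E)
  /\
  ((forall x : R, 0 <= x -> r x = ln (1 + x) / 2) ->
   let mu := meanX P X in
   let a := xlow P X in
   let c1 := (mu + a + Num.sqrt ((mu + a) ^+ 2 - 4 * (a ^+ 2 + a - mu))) / 2 in
   let c2 := 4 / 3 * mu + 1 / 3 in
   cbarbar P X rp =
     (if mu <= 3 / 2 * a + 1 / 2 then Order.min c1%:E (xup P X)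
      else Order.min c2%:E (xup P X))).
Proof.
move=> mX X0 iX _ r_nondecr r_concave r_derive r_rderive0 rp_cont rp_lt.
have rp_antitone := rp_nonincreasing r_concave r_derive r_rderive0.
have rp_nonneg := rp_ge0 r_concave r_derive r_rderive0 r_nondecr.
split=> [c|r_log mu a c1 c2]; first exact: le_cbarbar_of_greedy.
have rp_log := rp_of_log r_derive r_rderive0 r_log.
case: ifP => [small|/negbT]; first exact: cbarbar_log_small_mean.
by rewrite -ltNge => large; exact: cbarbar_log_large_mean.
Qed.
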